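(* Let $A$ be an associative commutative $\mathbb{C}$-algebra and $\Psi : A \to A$ an algebra automorphism, and regard $A$ as a subalgebra of the crossed product $A \rtimes_{\Psi} \mathbb{Z}$ via $a \mapsto a\delta^0$. Then the commutant $A' = \{ f \in A \rtimes_{\Psi}\mathbb{Z} : f * a = a * f \text{ for all } a \in A\}$ of $A$ in $A \rtimes_{\Psi} \mathbb{Z}$ is abelian; consequently $A'$ is the unique maximal abelian subalgebra of $A \rtimes_{\Psi} \mathbb{Z}$ containing $A$.
   Context: The crossed product $A \rtimes_{\Psi} \mathbb{Z}$ is the set of functions $f : \mathbb{Z} \to A$ with $f(n)=0$ for all but finitely many $n$, with pointwise addition and scalar multiplication and with multiplication given by twisted convolution $(f*g)(n) = \sum_{k\in\mathbb{Z}} f(k)\cdot \Psi^k(g(n-k))$, where $\Psi^k$ is the $k$-fold iterate of $\Psi$ (negative $k$ meaning iterates of $\Psi^{-1}$). Elements are written $f = \sum_n f_n \delta^n$ with $f_n = f(n)$, and $(f_n\delta^n)*(g_m\delta^m) = f_n \Psi^n(g_m)\delta^{n+m}$. *)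

From HB Require Import structures.
From mathcomp Require Import all_boot all_order all_algebra.
From mathcomp Require Import finmap.
From mathcomp Require Export complex.
Set Implicit Arguments. Unset Strict Implicit. Unset Printing Implicit Defensive.
Import Order.TTheory GRing.Theory Num.Theory.
Local Open Scope ring_scope.


Section CrossedProduct.
Variables (K : nzRingType) (A : lmodType K).

Definition is_comm_assoc_algebra (mul : A -> A -> A) : Prop :=
  [/\ forall x y z, mul x (mul y z) = mul (mul x y) z,
      forall x y, mul x y = mul y x,
      forall (c : K) x y z, mul (c *: x + y) z = c *: mul x z + mul y z &
      forall (c : K) x y z, mul z (c *: x + y) = c *: mul z x + mul z y].

Definition is_algebra_automorphism (mul : A -> A -> A) (Psi Psi' : A -> A) : Prop :=
  [/\ forall (c : K) x y, Psi (c *: x + y) = c *: Psi x + Psi y,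
      forall x y, Psi (mul x y) = mul (Psi x) (Psi y),
      cancel Psi Psi' & cancel Psi' Psi].

Definition iterz (Psi Psi' : A -> A) (k : int) : A -> A :=
  match k with
  | Posz n => iter n Psi
  | Negz n => iter n.+1 Psi'
  end.

(* elements of the crossed product: finitely supported functions Z -> A *)
Definition crossed (A0 : lmodType K) := {fsfun int -> A0 with 0}.

Variables (mul : A -> A -> A) (Psi Psi' : A -> A).

Definition cp_mul (f g : crossed A) : crossed A :=
  [fsfun n in [fset (k + l)%R | k in finsupp f, l in finsupp g]%fset
     => \sum_(k <- finsupp f) mul (f k) (iterz Psi Psi' k (g (n - k)%R))].

Definition cp_add (f g : crossed A) : crossed A :=
  [fsfun n in (finsupp f `|` finsupp g)%fset => f n + g n].
Definition cp_scale (c : K) (f : crossed A) : crossed A :=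
  [fsfun n in finsupp f => c *: f n].
Definition cp_zero : crossed A := [fsfun n in fset0%fset => (0 : A)].

Definition delta0 (a : A) : crossed A := [fsfun n in [fset (0%R : int)]%fset => a].

Definition commutant (f : crossed A) : Prop :=
  forall a : A, cp_mul f (delta0 a) = cp_mul (delta0 a) f.

Definition is_subalgebra (B : crossed A -> Prop) : Prop :=
  [/\ B cp_zero,
      forall f g, B f -> B g -> B (cp_add f g),
      forall c f, B f -> B (cp_scale c f) &
      forall f g, B f -> B g -> B (cp_mul f g)].

Definition is_abelian (B : crossed A -> Prop) : Prop :=
  forall f g, B f -> B g -> cp_mul f g = cp_mul g f.

Definition contains_A (B : crossed A -> Prop) : Prop :=
  forall a : A, B (delta0 a).

Definition max_abelian_containing_A (B : crossed A -> Prop) : Prop :=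
  [/\ is_subalgebra B, is_abelian B, contains_A B &
      forall B' : crossed A -> Prop, is_subalgebra B' -> is_abelian B' ->
        (forall f, B f -> B' f) -> forall f, B' f -> B f].
End CrossedProduct.

From mathcomp Require Import all_boot all_algebra.
From mathcomp Require Import finmap complex.
From mathcomp Require Import reals.
From mathcomp Require Import zify.
Set Implicit Arguments. Unset Strict Implicit. Unset Printing Implicit Defensive.
Import GRing.Theory.
Local Open Scope ring_scope.

(* An element f of the crossed product commutes with every a δ^0 iff
   f(n) Ψ^n(a) = a f(n) for all n and a.  For f, g in the commutant A' this
   turns both (f*g)(n) and (g*f)(n) into Σ_j g(j) f(n-j), so A' is abelian.
   Any abelian subalgebra containing A lies in A', and A' itself contains A
   because A is commutative; hence A' is the unique maximal abelian
   subalgebra containing A. *)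

Lemma eq_fbigl_supp (R : Type) (idx : R) (op : Monoid.com_law idx)
    (I : choiceType) (S T : {fset I}) (F : I -> R) :
  (forall i, i \in S -> i \notin T -> F i = idx) ->
  (forall i, i \in T -> i \notin S -> F i = idx) ->
  \big[op/idx]_(i <- S) F i = \big[op/idx]_(i <- T) F i.
Proof.
move=> FS FT.
rewrite (big_fset_incl _ (fsubsetUl S T)) => [|i]; last by rewrite inE => /orP[->|/FT].
by rewrite [RHS](big_fset_incl _ (fsubsetUr S T)) // => i; rewrite inE => /orP[/FS|->].
Qed.

Lemma raddf0_of_morph (U V : zmodType) (f : U -> V) : {morph f : x y / x + y} -> f 0 = 0.
Proof. by move=> fD; apply: (@addrI _ (f 0)); rewrite -fD !addr0. Qed.

Section Commutant.
Variables (K : nzRingType) (A : lmodType K).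
Variables (mul : A -> A -> A) (Psi Psi' : A -> A).
Hypothesis mul_algebra : is_comm_assoc_algebra mul.
Hypothesis Psi_automorphism : is_algebra_automorphism mul Psi Psi'.

Local Notation "x ** y" := (mul x y) (at level 40, left associativity).
Local Notation Psiz := (iterz Psi Psi').
Local Notation cpmul := (cp_mul mul Psi Psi').
Implicit Types (a x y z : A) (c : K) (f g : crossed A) (k m n : int).

Lemma mulA x y z : x ** (y ** z) = x ** y ** z.
Proof. by case: mul_algebra. Qed.

Lemma mulC x y : x ** y = y ** x.
Proof. by case: mul_algebra. Qed.

Lemma mulDl x y z : (x + y) ** z = x ** z + y ** z.
Proof. by case: mul_algebra => _ _ mulZDl _; rewrite -[x]scale1r mulZDl !scale1r. Qed.

Lemma mulDr x y z : z ** (x + y) = z ** x + z ** y.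
Proof. by rewrite !(mulC z) mulDl. Qed.

Lemma mul0l z : 0 ** z = 0.
Proof. exact: (@raddf0_of_morph _ _ (mul^~ z) (fun x y => mulDl x y z)). Qed.

Lemma mul0r z : z ** 0 = 0.
Proof. by rewrite mulC mul0l. Qed.

Lemma mulZl c x z : (c *: x) ** z = c *: (x ** z).
Proof. by case: mul_algebra => _ _ mulZDl _; rewrite -[c *: x]addr0 mulZDl mul0l addr0. Qed.

Lemma mul_suml (I : Type) (s : seq I) (F : I -> A) z :
  (\sum_(i <- s) F i) ** z = \sum_(i <- s) F i ** z.
Proof. by elim/big_rec2: _ => [|i y1 y2 _ <-]; rewrite ?mul0l ?mulDl. Qed.

Lemma mul_sumr (I : Type) (s : seq I) (F : I -> A) z :
  z ** (\sum_(i <- s) F i) = \sum_(i <- s) z ** F i.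
Proof. by rewrite mulC mul_suml; apply: eq_bigr => i _; rewrite mulC. Qed.

Lemma PsiK : cancel Psi Psi'. Proof. by case: Psi_automorphism. Qed.
Lemma Psi'K : cancel Psi' Psi. Proof. by case: Psi_automorphism. Qed.
Lemma PsiM x y : Psi (x ** y) = Psi x ** Psi y. Proof. by case: Psi_automorphism. Qed.

Lemma Psi'M x y : Psi' (x ** y) = Psi' x ** Psi' y.
Proof. by apply: (can_inj PsiK); rewrite PsiM !Psi'K. Qed.

Lemma Psi0 : Psi 0 = 0.
Proof.
apply: (@raddf0_of_morph _ _ Psi) => x y.
by case: Psi_automorphism => PsiZD _ _ _; rewrite -[x]scale1r PsiZD !scale1r.
Qed.

Lemma Psi'0 : Psi' 0 = 0.
Proof. by rewrite -{1}Psi0 PsiK. Qed.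

Lemma iterzM k x y : Psiz k (x ** y) = Psiz k x ** Psiz k y.
Proof.
have iterM h (n : nat) : {morph h : u v / u ** v} -> {morph iter n h : u v / u ** v}.
  by move=> hM; elim: n => // n IH u v /=; rewrite IH hM.
by case: k => n; [exact: (iterM _ n PsiM) | exact: (iterM _ n.+1 Psi'M)].
Qed.

Lemma iterz0 k : Psiz k 0 = 0.
Proof. by case: k => n /=; elim: n => [|n /= ->]; rewrite ?Psi0 ?Psi'0. Qed.

Lemma iterzS k x : Psiz (k + 1) x = Psi (Psiz k x).
Proof.
case: k => [n|[|n]]; first by rewrite (_ : Posz n + 1 = Posz n.+1) //; lia.
  by rewrite /= Psi'K.
by rewrite (_ : Negz n.+1 + 1 = Negz n) /= ?Psi'K // !NegzE; lia.
Qed.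

Lemma iterzD k m x : Psiz k (Psiz m x) = Psiz (k + m) x.
Proof.
have iterzN1 l y : Psiz (l - 1) y = Psi' (Psiz l y).
  by rewrite -{2}(subrK 1 l) iterzS PsiK.
case: k => n; elim: n => [|n IH].
- by rewrite add0r.
- by rewrite /= in IH *; rewrite IH -iterzS; congr Psiz; lia.
- by rewrite /= -iterzN1; congr Psiz; rewrite NegzE; lia.
- by rewrite /= in IH *; rewrite IH -iterzN1; congr Psiz; rewrite !NegzE; lia.
Qed.

Lemma cp_mulE f g n : cpmul f g n = \sum_(k <- finsupp f) f k ** Psiz k (g (n - k)).
Proof.
rewrite fsfun_fun; case: ifP => // /negbT nfg.
rewrite big_seq big1 // => k kf; rewrite [g _]fsfun_dflt ?iterz0 ?mul0r //.
move: nfg; apply: contraNN => kg; rewrite -(subrKC k n); exact: in_imfset2.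
Qed.

Lemma delta0E a n : delta0 a n = if n == 0 then a else 0.
Proof. by rewrite fsfun_fun inE. Qed.

Lemma cp_addE f g n : cp_add f g n = f n + g n.
Proof.
rewrite fsfun_fun inE; case: finsuppP => [fN|//]; case: finsuppP => //= gN.
by rewrite addr0.
Qed.

Lemma cp_scaleE c f n : cp_scale c f n = c *: f n.
Proof. by rewrite fsfun_fun; case: finsuppP; rewrite ?scaler0. Qed.

Lemma cp_zeroE n : @cp_zero K A n = 0.
Proof. by rewrite fsfun_fun. Qed.

Lemma cp_mul_delta0E f a n : cpmul f (delta0 a) n = f n ** Psiz n a.
Proof.
rewrite cp_mulE (eq_fbigl_supp _ (T := [fset n]%fset)) ?big_seq_fset1 ?subrr ?delta0E //.
- by move=> k _; rewrite inE delta0E subr_eq0 eq_sym => /negPf ->; rewrite iterz0 mul0r.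
- by move=> k; rewrite inE => /eqP -> /fsfun_dflt ->; rewrite mul0l.
Qed.

Lemma delta0_cp_mulE f a n : cpmul (delta0 a) f n = a ** f n.
Proof.
rewrite cp_mulE (eq_fbigl_supp _ (T := [fset 0]%fset)) ?big_seq_fset1 ?subr0 ?delta0E //.
- by move=> k _; rewrite inE delta0E => /negPf ->; rewrite mul0l.
- by move=> k; rewrite inE => /eqP -> /fsfun_dflt; rewrite delta0E eqxx => ->; rewrite !mul0l.
Qed.

Lemma commutantP f :
  commutant mul Psi Psi' f <-> forall n a, f n ** Psiz n a = a ** f n.
Proof.
split=> [fA n a | fA a]; first by rewrite -cp_mul_delta0E fA delta0_cp_mulE.
by apply/fsfunP => n; rewrite cp_mul_delta0E delta0_cp_mulE fA.
Qed.

Lemma commutant_abelian : is_abelian mul Psi Psi' (commutant mul Psi Psi').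
Proof.
move=> f g /commutantP fA /commutantP gA; apply/fsfunP => n; rewrite !cp_mulE.
pose h j := g j ** f (n - j).
have -> : \sum_(k <- finsupp f) f k ** Psiz k (g (n - k)) =
          \sum_(j <- ((fun k => n - k) @` finsupp f)%fset) h j.
  rewrite big_imfset /=; last by move=> k l _ _ /addrI/oppr_inj.
  by apply: eq_bigr => k _; rewrite fA /h subKr.
rewrite (eq_fbigl_supp _ (T := finsupp g)) => [|j|j _ jN].
- by apply: eq_bigr => j _; rewrite gA mulC.
- by rewrite /h => _ /fsfun_dflt ->; rewrite mul0l.
- rewrite /h [f _]fsfun_dflt ?mul0r //; apply: contra jN => fj.
  by apply/imfsetP; exists (n - j); rewrite ?subKr.
Qed.

Lemma commutant_subalgebra : is_subalgebra mul Psi Psi' (commutant mul Psi Psi').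
Proof.
split.
- by apply/commutantP => n a; rewrite cp_zeroE mul0l mul0r.
- move=> f g /commutantP fA /commutantP gA; apply/commutantP => n a.
  by rewrite !cp_addE mulDl mulDr fA gA.
- move=> c f /commutantP fA; apply/commutantP => n a.
  by rewrite !cp_scaleE mulZl fA [RHS]mulC mulZl mulC.
- move=> f g /commutantP fA /commutantP gA; apply/commutantP => n a.
  rewrite !cp_mulE mul_suml mul_sumr; apply: eq_bigr => k _.
  have -> : Psiz n a = Psiz k (Psiz (n - k) a) by rewrite iterzD subrKC.
  by rewrite -mulA -iterzM gA iterzM mulA fA mulA.
Qed.

Lemma commutant_contains_A : contains_A (commutant mul Psi Psi').
Proof.
move=> b; apply/commutantP => n a; rewrite !delta0E.
by case: eqP => [->|_]; [rewrite mulC | rewrite mul0l mul0r].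
Qed.

Lemma abelian_sub_commutant B :
  is_abelian mul Psi Psi' B -> contains_A B ->
  forall f, B f -> commutant mul Psi Psi' f.
Proof. by move=> abB AB f Bf a; apply: abB. Qed.

Lemma commutant_max_abelian :
  max_abelian_containing_A mul Psi Psi' (commutant mul Psi Psi').
Proof.
split; [exact: commutant_subalgebra | exact: commutant_abelian
       | exact: commutant_contains_A |].
move=> B _ abB AB; apply: abelian_sub_commutant abB _ => a.
exact/AB/commutant_contains_A.
Qed.

Lemma max_abelian_eq_commutant B :
  max_abelian_containing_A mul Psi Psi' B ->
  forall f, B f <-> commutant mul Psi Psi' f.
Proof.
case=> _ abB AB maxB f; split; first exact: abelian_sub_commutant.
apply: maxB; [exact: commutant_subalgebra | exact: commutant_abelian |].
exact: abelian_sub_commutant.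
Qed.

End Commutant.

Theorem proposition2p1 (R : realType) (A : lmodType R[i])
    (mul : A -> A -> A) (Psi Psi' : A -> A) :
  is_comm_assoc_algebra mul ->
  is_algebra_automorphism mul Psi Psi' ->
  is_abelian mul Psi Psi' (commutant mul Psi Psi') /\
  max_abelian_containing_A mul Psi Psi' (commutant mul Psi Psi') /\
  (forall B : crossed A -> Prop, max_abelian_containing_A mul Psi Psi' B ->
     forall f, B f <-> commutant mul Psi Psi' f).
Proof.
move=> mulP PsiP; split; [exact: commutant_abelian | split].
- exact: commutant_max_abelian.
- exact: max_abelian_eq_commutant.
Qed.
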